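(* For the step set $\mathcal A$ and for both $t_0=\tfrac12$ and $t_0=-\tfrac12$, $$Q_{\mathcal A}(x,0,t_0)=\sum_{n\ge0}\frac{T_n}{4^n}x^{2n},$$ where $(T_n)_{n\ge0}=(1,2,16,272,7936,\dots)$ is the sequence of tangent numbers, defined by $\tan x=\sum_{n\ge0}T_n\frac{x^{2n+1}}{(2n+1)!}$. Equivalently, $$Q_{\mathcal A}(x,0,\tfrac12)=2\sum_{n\ge0}(2^{2n+2}-1)\frac{(-1)^n}{n+1}B_{2n+2}x^{2n},$$ where $(B_n)_{n\ge0}$ are the Bernoulli numbers.
   Context: Let $\mathbb N=\{0,1,2,\dots\}$ and $\mathcal A=\{(-1,1),(1,1),(1,-1)\}$. $\#_{\mathcal A}\{(0,0)\xrightarrow{n}(i,j)\}$ is the number of sequences $p_0=(0,0),p_1,\dots,p_n=(i,j)$ of points of $\mathbb N^2$ with $p_m-p_{m-1}\in\mathcal A$. For $t_0\in\{\tfrac12,-\tfrac12\}$, $Q_{\mathcal A}(x,0,t_0)=\sum_{i\ge0}\big(\sum_{n\ge0}\#_{\mathcal A}\{(0,0)\xrightarrow{n}(i,0)\}t_0^n\big)x^i$ (the inner series converge). Bernoulli numbers are defined by $\sum_{n\ge0}B_n\frac{x^n}{n!}=\frac{x}{e^x-1}$. *)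

From Stdlib Require Import Reals ZArith List Arith.
From Coquelicot Require Import Coquelicot.
Import ListNotations.
Open Scope R_scope.

Inductive step := SW_NE | S_NE | S_SE .
Definition steps : list step := [SW_NE; S_NE; S_SE].
Definition dx (s : step) : Z := match s with SW_NE => (-1)%Z | S_NE => 1%Z | S_SE => 1%Z end.
Definition dy (s : step) : Z := match s with SW_NE => 1%Z | S_NE => 1%Z | S_SE => (-1)%Z end.

Fixpoint words (n : nat) : list (list step) :=
  match n with
  | O => [[]]
  | S m => flat_map (fun w => map (fun s => w ++ [s]) steps) (words m)
  end.

Fixpoint run (x y : Z) (w : list step) : option (Z * Z) :=
  match w with
  | [] => Some (x, y)
  | s :: w' =>
      let x' := (x + dx s)%Z in let y' := (y + dy s)%Z in
      if andb (Z.leb 0 x') (Z.leb 0 y') then run x' y' w' else None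
  end.

Definition ends_at (i j : nat) (w : list step) : bool :=
  match run 0%Z 0%Z w with
  | Some (x, y) => andb (Z.eqb x (Z.of_nat i)) (Z.eqb y (Z.of_nat j))
  | None => false
  end.

Definition nwalks (n i j : nat) : nat := length (filter (ends_at i j) (words n)).

Definition tangent_number (n : nat) : R := Derive_n tan (2 * n + 1) 0.

(* Bernoulli numbers: x/(e^x - 1) = sum_n B_n x^n / n!, the generating function
   extended by continuity (value 1) at 0; B_n is its n-th derivative at 0. *)
Definition bern_gf (x : R) : R := if Req_EM_T x 0 then 1 else x / (exp x - 1).
Definition bernoulli (n : nat) : R := Derive_n bern_gf n 0.

(* Coefficient of x^i in sum_n T_n/4^n x^(2n). *)
Definition tan_coef (i : nat) : R :=
  if Nat.even i then tangent_number (Nat.div2 i) / 4 ^ (Nat.div2 i) else 0.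

(* Coefficient of x^i in 2 sum_n (2^(2n+2)-1) (-1)^n/(n+1) B_(2n+2) x^(2n). *)
Definition bern_coef (i : nat) : R :=
  let k := Nat.div2 i in
  if Nat.even i then
    2 * (2 ^ (2 * k + 2) - 1) * (-1) ^ k / INR (k + 1) * bernoulli (2 * k + 2)
  else 0.

(* Weight a walk of length n by 2^-n and let w_n(a, b) be the total weight of
   the walks from (0,0) to (a,b), so that w_0 is the indicator of the origin and
   w_(n+1) = T w_n for the linear operator T = transfer.  If V = delta + T V, then
   sum_(n <= N) w_n = V - T^(N+1) V, and T^N V -> 0 pointwise because T contracts
   the weight mu^(a+b) (a+1) (b+1) on each triangle a + b <= L, which T preserves.

   For any sequence t, the function V = green t,
     V(a, b) = sum_(i <= m) (-1)^(m-i) t_i C(b+1, 2(m-i)+1)      (a + b = 2m),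
   and V = 0 when a + b is odd, satisfies the equations V = delta + T V away from the
   axis a = 0, and everywhere provided that
     sum_(i <= m) (-1)^(m-i) t_i C(2m+2, 2(m-i)+1) = 2 (-1)^m   for all m,
   and then Q(x, 0, 1/2) = sum_k V(2k, 0) x^(2k) = sum_k t_k x^(2k).  Writing the
   binomial as a ratio of factorials, this condition is the coefficient identity
   of tan(x/2) sin x = 1 - cos x for t_k = T_k / 4^k, and of
   (B(2x) - B(x) + x/2) sinh x = x (cosh x - 1) / 2, B(x) = x / (e^x - 1), for the
   Bernoulli expression.  The Taylor series of tan and B are obtained as products
   with reciprocals of power series with bounded coefficients.  Finally, walks
   reaching the x-axis have even length, so t0 = -1/2 gives the same series. *)

From Stdlib Require Import Reals.
From Coquelicot Require Import Coquelicot.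
Open Scope R_scope.
From Stdlib Require Import ZArith List Arith Lia Lra FunctionalExtensionality.
Import ListNotations.

Lemma even_double m : Nat.even (2 * m) = true.
Proof. apply Nat.even_spec; exists m; reflexivity. Qed.

Lemma even_double_1 m : Nat.even (2 * m + 1) = false.
Proof. rewrite Nat.add_comm, Nat.even_add_mul_2; reflexivity. Qed.

Lemma div2_double_1 m : Nat.div2 (2 * m + 1) = m.
Proof. rewrite Nat.add_1_r; apply Nat.div2_succ_double. Qed.

Lemma run_nonneg w x y p q : (0 <= x)%Z -> (0 <= y)%Z ->
  run x y w = Some (p, q) -> (0 <= p)%Z /\ (0 <= q)%Z.
Proof.
  revert x y; induction w as [|s w IH]; simpl; intros x y Hx Hy H.
  - injection H as <- <-; auto.
  - destruct (andb _ _) eqn:Hstep; [|discriminate].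
    apply andb_prop in Hstep as [Hx' Hy']; apply Z.leb_le in Hx', Hy'.
    exact (IH _ _ Hx' Hy' H).
Qed.

Lemma run_snoc x y w s : run x y (w ++ [s]) =
  match run x y w with
  | Some (a, b) => if andb (Z.leb 0 (a + dx s)) (Z.leb 0 (b + dy s))
                   then Some (a + dx s, b + dy s)%Z else None
  | None => None
  end.
Proof.
  revert x y; induction w as [|s' w IH]; intros x y; simpl; [reflexivity|].
  destruct (andb _ _); [apply IH | reflexivity].
Qed.

Lemma ends_at_snoc a b w s : ends_at a b (w ++ [s]) =
  match run 0 0 w with
  | Some (p, q) => andb (Z.eqb (p + dx s) (Z.of_nat a)) (Z.eqb (q + dy s) (Z.of_nat b))
  | None => false
  end.
Proof.
  unfold ends_at; rewrite run_snoc.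
  destruct (run 0 0 w) as [[p q]|] eqn:Hw; [|reflexivity].
  destruct (run_nonneg _ _ _ _ _ (Z.le_refl 0) (Z.le_refl 0) Hw).
  destruct (Z.leb_spec 0 (p + dx s)), (Z.leb_spec 0 (q + dy s)); [reflexivity| | |];
    destruct (Z.eqb_spec (p + dx s) (Z.of_nat a)), (Z.eqb_spec (q + dy s) (Z.of_nat b));
    reflexivity || lia.
Qed.

Ltac solve_ends_at a b :=
  rewrite ends_at_snoc; unfold ends_at;
  destruct (run 0 0 _) as [[p q]|] eqn:Hrun;
  [pose proof (run_nonneg _ _ _ _ _ (Z.le_refl 0) (Z.le_refl 0) Hrun)|];
  destruct a, b; simpl dx; simpl dy; try reflexivity;
  repeat match goal with |- context [Z.eqb ?x ?y] => destruct (Z.eqb_spec x y) end;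
  simpl; reflexivity || lia.

Lemma ends_at_SW_NE a b w : ends_at a b (w ++ [SW_NE]) =
  match b with 0 => false | S b' => ends_at (S a) b' w end.
Proof. solve_ends_at a b. Qed.

Lemma ends_at_S_NE a b w : ends_at a b (w ++ [S_NE]) =
  match a, b with S a', S b' => ends_at a' b' w | _, _ => false end.
Proof. solve_ends_at a b. Qed.

Lemma ends_at_S_SE a b w : ends_at a b (w ++ [S_SE]) =
  match a with 0 => false | S a' => ends_at a' (S b) w end.
Proof. solve_ends_at a b. Qed.

Lemma length_filter_extend (P : list step -> bool) l :
  length (filter P (flat_map (fun w => map (fun s => w ++ [s]) steps) l)) =
  (length (filter (fun w => P (w ++ [SW_NE])) l) +
   length (filter (fun w => P (w ++ [S_NE])) l) +
   length (filter (fun w => P (w ++ [S_SE])) l))%nat.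
Proof.
  induction l as [|w l IH]; [reflexivity|]; simpl in *.
  destruct (P (w ++ [SW_NE])), (P (w ++ [S_NE])), (P (w ++ [S_SE])); simpl; lia.
Qed.

Lemma length_filter_false {A} (l : list A) : length (filter (fun _ => false) l) = 0%nat.
Proof. induction l; auto. Qed.

Lemma nwalks_0 a b : nwalks 0 a b = match a, b with 0, 0 => 1 | _, _ => 0 end%nat.
Proof. destruct a, b; reflexivity. Qed.

Lemma nwalks_S n a b : nwalks (S n) a b =
  ((match b with 0 => 0 | S b' => nwalks n (S a) b' end) +
   (match a, b with S a', S b' => nwalks n a' b' | _, _ => 0 end) +
   (match a with 0 => 0 | S a' => nwalks n a' (S b) end))%nat.
Proof.
  unfold nwalks; simpl words; rewrite length_filter_extend.
  rewrite (filter_ext _ _ (ends_at_SW_NE a b)), (filter_ext _ _ (ends_at_S_NE a b)),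
    (filter_ext _ _ (ends_at_S_SE a b)).
  destruct a, b; rewrite ?length_filter_false; reflexivity.
Qed.

Lemma nwalks_parity n a b :
  nwalks n a b <> 0%nat -> Nat.Even (a + n) /\ Nat.Even (b + n).
Proof.
  revert a b; induction n as [|n IH]; intros a b Hn.
  - destruct a, b; try (now contradiction Hn); split; exists 0%nat; reflexivity.
  - rewrite nwalks_S in Hn.
    assert (Hprev : exists a' b', nwalks n a' b' <> 0%nat /\
      (a' = S a \/ S a' = a) /\ (b' = S b \/ S b' = b)).
    { destruct a as [|a], b as [|b]; simpl in Hn;
        [lia | exists 1%nat, b; lia | exists a, 1%nat; lia |].
      destruct (Nat.eq_dec (nwalks n (S (S a)) b) 0); [|exists (S (S a)), b; lia].
      destruct (Nat.eq_dec (nwalks n a b) 0); [|exists a, b; lia].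
      exists a, (S (S b)); lia. }
    destruct Hprev as (a' & b' & Hab' & Ha & Hb).
    destruct (IH a' b' Hab') as [[p Hp] [q Hq]].
    split; [destruct Ha | destruct Hb]; first [exists p; lia | exists (S p); lia
                                               | exists q; lia | exists (S q); lia].
Qed.

(** * The transfer operator *)

Definition transfer (f : nat -> nat -> R) (a b : nat) : R :=
  / 2 * ((match b with 0 => 0 | S b' => f (S a) b' end) +
         (match a, b with S a', S b' => f a' b' | _, _ => 0 end) +
         (match a with 0 => 0 | S a' => f a' (S b) end)).

Definition origin (a b : nat) : R := match a, b with 0, 0 => 1 | _, _ => 0 end.

Lemma transfer_sub f g :
  transfer (fun a b => f a b - g a b) = fun a b => transfer f a b - transfer g a b.
Proof.
  apply functional_extensionality; intro a; apply functional_extensionality; intro b.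
  unfold transfer; destruct a, b; lra.
Qed.

Lemma iter_transfer_sub N f g :
  Nat.iter N transfer (fun a b => f a b - g a b) =
  fun a b => Nat.iter N transfer f a b - Nat.iter N transfer g a b.
Proof. induction N as [|N IH]; simpl; [reflexivity|]; rewrite IH; apply transfer_sub. Qed.

Definition walk_weight (n a b : nat) : R := INR (nwalks n a b) * (1 / 2) ^ n.

Lemma walk_weight_iter n : walk_weight n = Nat.iter n transfer origin.
Proof.
  induction n as [|n IH]; apply functional_extensionality; intro a;
    apply functional_extensionality; intro b.
  - unfold walk_weight; rewrite nwalks_0; destruct a, b; simpl; lra.
  - rewrite Nat.iter_succ, <- IH; unfold walk_weight, transfer.
    rewrite nwalks_S, !plus_INR; simpl pow; destruct a, b; simpl INR; lra.
Qed.

Definition weight (mu : R) (a b : nat) : R := mu ^ (a + b) * (INR a + 1) * (INR b + 1).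

Lemma weight_ge_1 mu a b : 1 <= mu -> 1 <= weight mu a b.
Proof.
  intros Hmu; unfold weight; pose proof (pow_R1_Rle mu (a + b) Hmu).
  pose proof (pos_INR a); pose proof (pos_INR b).
  assert (1 <= (INR a + 1) * (INR b + 1)) by nra; nra.
Qed.

Lemma transfer_weight mu a b :
  transfer (weight mu) a b * (2 * mu ^ 2) =
  mu ^ (a + b) * (mu ^ 2 * ((INR a + 2) * INR b + INR a * (INR b + 2)) + INR a * INR b).
Proof.
  unfold transfer, weight; destruct a as [|a], b as [|b];
    rewrite ?Nat.add_succ_r, ?Nat.add_succ_l, ?Nat.add_0_r, ?S_INR, ?INR_0; simpl pow; field.
Qed.

Definition contraction (L : nat) : R := 1 - / (2 * (INR L + 1) ^ 2).

Lemma contraction_bounds L : 0 <= contraction L < 1.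
Proof.
  unfold contraction; pose proof (pos_INR L).
  assert (1 <= (INR L + 1) ^ 2) by nra.
  assert (0 < / (2 * (INR L + 1) ^ 2) <= / 2).
  { split; [apply Rinv_0_lt_compat | apply Rinv_le_contravar]; lra. }
  lra.
Qed.

(* With mu = L + 1 this reduces to 2ab + a + b + 1 <= 2 mu^2. *)
Lemma transfer_weight_le L a b : (a + b <= L)%nat ->
  transfer (weight (INR L + 1)) a b <= contraction L * weight (INR L + 1) a b.
Proof.
  intros Hab; set (mu := INR L + 1).
  assert (Hmu : 1 <= mu) by (unfold mu; pose proof (pos_INR L); lra).
  assert (Hsum : INR a + INR b + 1 <= mu)
    by (unfold mu; rewrite <- plus_INR; apply le_INR in Hab; lra).
  apply (Rmult_le_reg_r (2 * mu ^ 2)); [nra|].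
  rewrite transfer_weight; unfold contraction, weight; fold mu.
  replace ((1 - / (2 * mu ^ 2)) * (mu ^ (a + b) * (INR a + 1) * (INR b + 1)) * (2 * mu ^ 2))
    with (mu ^ (a + b) * ((2 * mu ^ 2 - 1) * (INR a + 1) * (INR b + 1))) by (field; nra).
  apply Rmult_le_compat_l; [apply pow_le; lra|].
  pose proof (pos_INR a); pose proof (pos_INR b).
  assert (2 * INR a * INR b + INR a + INR b + 1 <= 2 * mu ^ 2) by nra.
  nra.
Qed.

(* [transfer g] at (a, b) only reads g at points (a', b') with a' + b' <= a + b. *)
Lemma Rabs_transfer_le (w g : nat -> nat -> R) L M a b :
  (forall a b, (a + b <= L)%nat -> Rabs (g a b) <= M * w a b) ->
  (a + b <= L)%nat -> Rabs (transfer g a b) <= M * transfer w a b.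
Proof.
  intros Hg Hab; unfold transfer.
  rewrite Rabs_mult, Rabs_right by lra.
  eapply Rle_trans; [apply Rmult_le_compat_l;
    [lra | eapply Rle_trans; [apply Rabs_triang | apply Rplus_le_compat_r, Rabs_triang]]|].
  destruct a as [|a], b as [|b]; rewrite ?Rabs_R0.
  - lra.
  - pose proof (Hg 1%nat b ltac:(lia)); lra.
  - pose proof (Hg a 1%nat ltac:(lia)); lra.
  - pose proof (Hg (S (S a)) b ltac:(lia)); pose proof (Hg a b ltac:(lia));
      pose proof (Hg a (S (S b)) ltac:(lia)); lra.
Qed.

Lemma Rabs_iter_transfer_le g L K N a b : 0 <= K ->
  (forall a b, (a + b <= L)%nat -> Rabs (g a b) <= K * weight (INR L + 1) a b) ->
  (a + b <= L)%nat ->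
  Rabs (Nat.iter N transfer g a b) <= K * contraction L ^ N * weight (INR L + 1) a b.
Proof.
  intros HK Hg; revert a b; induction N as [|N IH]; intros a b Hab.
  - simpl; rewrite Rmult_1_r; auto.
  - rewrite Nat.iter_succ.
    eapply Rle_trans; [apply (Rabs_transfer_le _ _ L _ _ _ IH Hab)|].
    pose proof (transfer_weight_le L a b Hab); pose proof (contraction_bounds L).
    assert (0 <= K * contraction L ^ N) by (apply Rmult_le_pos; [|apply pow_le]; lra).
    simpl pow; nra.
Qed.

Lemma sum_f_R0_ge_term f n i :
  (forall j, 0 <= f j) -> (i <= n)%nat -> f i <= sum_f_R0 f n.
Proof.
  intros Hf Hi; induction n as [|n IH].
  - replace i with 0%nat by lia; simpl; lra.
  - rewrite tech5; pose proof (Hf (S n)).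
    destruct (Nat.eq_dec i (S n)) as [->|Hne].
    + pose proof (cond_pos_sum f n Hf); lra.
    + specialize (IH ltac:(lia)); lra.
Qed.

Lemma is_lim_seq_geom_bound (u : nat -> R) C q : 0 <= q < 1 ->
  (forall N, Rabs (u N) <= C * q ^ N) -> is_lim_seq u 0.
Proof.
  intros Hq Hu; apply is_lim_seq_abs_0.
  apply (is_lim_seq_le_le (fun _ => 0) _ (fun N => C * q ^ N)).
  - intros N; split; [apply Rabs_pos | apply Hu].
  - apply is_lim_seq_const.
  - replace (Finite 0) with (Rbar_mult C 0) by (simpl; f_equal; ring).
    apply is_lim_seq_scal_l, is_lim_seq_geom; rewrite Rabs_right; lra.
Qed.

Lemma iter_transfer_lim g a b : is_lim_seq (fun N => Nat.iter N transfer g a b) 0.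
Proof.
  set (L := (a + b)%nat).
  set (K := sum_f_R0 (fun a' => sum_f_R0 (fun b' => Rabs (g a' b')) L) L).
  assert (Hg : forall a' b', (a' + b' <= L)%nat -> Rabs (g a' b') <= K * weight (INR L + 1) a' b').
  { intros a' b' Hab'.
    assert (Rabs (g a' b') <= K).
    { eapply Rle_trans; [|apply (sum_f_R0_ge_term _ L a')].
      - apply (sum_f_R0_ge_term (fun b' => Rabs (g a' b'))); [intros; apply Rabs_pos | lia].
      - intros; apply cond_pos_sum; intros; apply Rabs_pos.
      - lia. }
    pose proof (Rabs_pos (g a' b')).
    pose proof (weight_ge_1 (INR L + 1) a' b' ltac:(pose proof (pos_INR L); lra)); nra. }
  apply (is_lim_seq_geom_bound _ (K * weight (INR L + 1) a b) (contraction L));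
    [apply contraction_bounds|].
  intros N; rewrite Rmult_assoc, (Rmult_comm (weight _ _ _)), <- Rmult_assoc.
  apply Rabs_iter_transfer_le; [|exact Hg | unfold L; lia].
  unfold K; apply cond_pos_sum; intros; apply cond_pos_sum; intros; apply Rabs_pos.
Qed.

(** * An explicit fixed point of the transfer operator *)

Fixpoint binom (n k : nat) : R :=
  match n, k with
  | _, 0 => 1
  | 0, S _ => 0
  | S n', S k' => binom n' k' + binom n' (S k')
  end.

Lemma binom_0 n : binom n 0 = 1.
Proof. destruct n; reflexivity. Qed.

Lemma binom_1 n : binom n 1 = INR n.
Proof. induction n as [|n IH]; [reflexivity|]; simpl binom; rewrite binom_0, IH, S_INR; lra. Qed.

Lemma binom_lt n k : (n < k)%nat -> binom n k = 0.
Proof.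
  revert k; induction n as [|n IH]; intros [|k] Hk; simpl; try lia; [reflexivity|].
  rewrite !IH by lia; lra.
Qed.

Lemma binom_C n k : (k <= n)%nat -> binom n k = Binomial.C n k.
Proof.
  revert k; induction n as [|n IH]; intros [|k] Hk; simpl binom;
    try (rewrite C_n_0; reflexivity); [lia|].
  destruct (Nat.eq_dec k n) as [->|Hkn].
  - rewrite (binom_lt n (S n)), IH, !C_n_n by lia; lra.
  - rewrite !IH by lia; apply pascal; lia.
Qed.

Definition alt_binom_sum (t : nat -> R) (m n : nat) : R :=
  sum_f_R0 (fun i => (-1) ^ (m - i) * t i * binom n (2 * (m - i) + 1)) m.

Lemma binom_diff2 n k :
  binom (S (S n)) (S (S k)) - 2 * binom (S n) (S (S k)) + binom n (S (S k)) = binom n k.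
Proof. simpl binom; lra. Qed.

Lemma alt_binom_sum_diff2 t m n :
  alt_binom_sum t (S m) (S (S n)) - 2 * alt_binom_sum t (S m) (S n)
    + alt_binom_sum t (S m) n = - alt_binom_sum t m n.
Proof.
  unfold alt_binom_sum.
  rewrite scal_sum, <- minus_sum, <- plus_sum, tech5, Nat.sub_diag, !binom_1, !S_INR.
  rewrite (sum_eq _ (fun i => (-1) ^ (m - i) * t i * binom n (2 * (m - i) + 1) * -1)).
  - rewrite <- scal_sum; lra.
  - intros i Hi.
    replace (S m - i)%nat with (S (m - i)) by lia.
    replace (2 * S (m - i) + 1)%nat with (S (S (2 * (m - i) + 1))) by lia.
    rewrite <- (binom_diff2 n (2 * (m - i) + 1)); simpl pow; lra.
Qed.

Lemma alt_binom_sum_le_2 t m n : (n <= 2)%nat -> alt_binom_sum t m n = t m * INR n.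
Proof.
  intros Hn; unfold alt_binom_sum; destruct m as [|m].
  - simpl; rewrite binom_1; lra.
  - rewrite tech5, sum_eq_R0, Nat.sub_diag, binom_1; [simpl; lra|].
    intros i Hi; rewrite binom_lt by lia; lra.
Qed.

Lemma alt_binom_sum_boundary t m :
  alt_binom_sum t m (2 * m + 2) = INR (fact (2 * m + 2)) *
    sum_f_R0 (fun i => t i / INR (fact (2 * i + 1)) *
                       ((-1) ^ (m - i) / INR (fact (2 * (m - i) + 1)))) m.
Proof.
  unfold alt_binom_sum; rewrite scal_sum; apply sum_eq; intros i Hi.
  rewrite binom_C by lia; unfold Binomial.C.
  replace (2 * m + 2 - (2 * (m - i) + 1))%nat with (2 * i + 1)%nat by lia.
  pose proof (INR_fact_neq_0 (2 * i + 1)); pose proof (INR_fact_neq_0 (2 * (m - i) + 1)).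
  field; auto.
Qed.

Definition boundary_condition (t : nat -> R) : Prop :=
  forall m, alt_binom_sum t m (2 * m + 2) = 2 * (-1) ^ m.

Definition green (t : nat -> R) (a b : nat) : R :=
  if Nat.even (a + b) then alt_binom_sum t (Nat.div2 (a + b)) (S b) else 0.

Lemma green_even t a b m : (a + b = 2 * m)%nat -> green t a b = alt_binom_sum t m (S b).
Proof. intros Hab; unfold green; rewrite Hab, even_double, Nat.div2_double; reflexivity. Qed.

Lemma green_odd t a b m : (a + b = 2 * m + 1)%nat -> green t a b = 0.
Proof. intros Hab; unfold green; rewrite Hab, even_double_1; reflexivity. Qed.

Section Green.

Variable t : nat -> R.
Hypothesis boundary : boundary_condition t.

Lemma boundary_condition_0 : t 0%nat = 1.
Proof.
  pose proof (boundary 0%nat) as Ht0; rewrite alt_binom_sum_le_2 in Ht0 by lia; simpl in Ht0; lra.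
Qed.

Lemma green_a0 b m : (b = 2 * m + 1)%nat -> green t 0 (S b) = / 2 * green t 1 b.
Proof.
  intros ->; rewrite (green_even t 0 _ (S m)), (green_even t 1 _ (S m)) by lia.
  pose proof (alt_binom_sum_diff2 t m (2 * m + 2)) as Hdiff.
  pose proof (boundary m) as Hm; pose proof (boundary (S m)) as HSm.
  replace (2 * S m + 2)%nat with (S (S (2 * m + 2))) in HSm by lia.
  replace (S (2 * m + 1)) with (2 * m + 2)%nat by lia.
  simpl pow in HSm; lra.
Qed.

Lemma green_fixpoint a b : green t a b = origin a b + transfer (green t) a b.
Proof.
  unfold transfer; destruct (Nat.Even_or_Odd (a + b)) as [[m Hm]|[m Hm]].
  - destruct a as [|a], b as [|b]; [| destruct m as [|m]; [lia|] ..].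
    + rewrite (green_even t 0 0 0), alt_binom_sum_le_2, boundary_condition_0 by lia.
      simpl; lra.
    + rewrite (green_a0 b m) by lia; simpl; lra.
    + rewrite (green_even t (S a) 0 (S m)), (green_even t a 1 (S m)),
        !alt_binom_sum_le_2 by lia.
      simpl; lra.
    + rewrite (green_even t (S a) (S b) (S m)), (green_even t (S (S a)) b (S m)),
        (green_even t a b m), (green_even t a (S (S b)) (S m)) by lia.
      pose proof (alt_binom_sum_diff2 t m (S b)); simpl origin; lra.
  - destruct a as [|a], b as [|b]; [lia | | | destruct m as [|m]; [lia|]].
    + rewrite (green_odd t 0 (S b) m), (green_odd t 1 b m) by lia; simpl; lra.
    + rewrite (green_odd t (S a) 0 m), (green_odd t a 1 m) by lia; simpl; lra.
    + rewrite (green_odd t (S a) (S b) (S m)), (green_odd t (S (S a)) b (S m)),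
        (green_odd t a b m), (green_odd t a (S (S b)) (S m)) by lia.
      simpl; lra.
Qed.

Lemma transfer_green : transfer (green t) = fun a b => green t a b - origin a b.
Proof.
  apply functional_extensionality; intro a; apply functional_extensionality; intro b.
  rewrite (green_fixpoint a b); lra.
Qed.

Lemma sum_walk_weight N a b :
  sum_n (fun n => walk_weight n a b) N = green t a b - Nat.iter (S N) transfer (green t) a b.
Proof.
  revert a b; induction N as [|N IH]; intros a b.
  - rewrite sum_O, walk_weight_iter; simpl; rewrite transfer_green; lra.
  - rewrite sum_Sn, IH, walk_weight_iter, (Nat.iter_succ_r (S N)), transfer_green,
      iter_transfer_sub.
    change plus with Rplus; lra.
Qed.

Lemma walk_weight_series a b : is_series (fun n => walk_weight n a b) (green t a b).
Proof.
  enough (H : is_lim_seq (sum_n (fun n => walk_weight n a b)) (green t a b)) by exact H.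
  apply (is_lim_seq_ext (fun N => green t a b - Nat.iter (S N) transfer (green t) a b)).
  { intros N; symmetry; apply sum_walk_weight. }
  replace (Finite (green t a b)) with (Rbar_minus (green t a b) 0) by (simpl; f_equal; ring).
  apply is_lim_seq_minus'; [apply is_lim_seq_const|].
  apply (is_lim_seq_incr_1 (fun N => Nat.iter N transfer (green t) a b)), iter_transfer_lim.
Qed.

End Green.

(** * Power series with geometrically bounded coefficients *)

Definition ps_bounded (a : nat -> R) (r M : R) : Prop := forall n, Rabs (a n * r ^ n) <= M.

Lemma ps_bounded_nonneg a r M : ps_bounded a r M -> 0 <= M.
Proof. intros H; specialize (H 0%nat); pose proof (Rabs_pos (a 0%nat * r ^ 0)); lra. Qed.

Lemma ps_bounded_CV_radius a r M x :
  ps_bounded a r M -> Rabs x < r -> Rbar_lt (Rabs x) (CV_radius a).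
Proof.
  intros Ha Hx; apply (Rbar_lt_le_trans _ r); [exact Hx|].
  apply (proj1 (CV_radius_bounded a)); exists M; exact Ha.
Qed.

Lemma ps_bounded_CV_radius_pos a r M : 0 < r -> ps_bounded a r M -> Rbar_lt 0 (CV_radius a).
Proof.
  intros Hr Ha; rewrite <- Rabs_R0; apply (ps_bounded_CV_radius a r M); [exact Ha|].
  rewrite Rabs_R0; exact Hr.
Qed.

Lemma ps_bounded_mono a r r' M : 0 <= r' <= r -> ps_bounded a r M -> ps_bounded a r' M.
Proof.
  intros Hr Ha n; eapply Rle_trans; [|apply Ha]; rewrite !Rabs_mult.
  apply Rmult_le_compat_l; [apply Rabs_pos|].
  rewrite !Rabs_right by (apply Rle_ge, pow_le; lra); apply pow_incr; lra.
Qed.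

Lemma ps_bounded_1 a : (forall n, Rabs (a n) <= 1) -> ps_bounded a 1 1.
Proof. intros Ha n; rewrite pow1, Rmult_1_r; apply Ha. Qed.

Lemma ps_bounded_scale_pow a k r M :
  ps_bounded a (k * r) M -> ps_bounded (fun n => k ^ n * a n) r M.
Proof.
  intros Ha n; replace (k ^ n * a n * r ^ n) with (a n * (k * r) ^ n)
    by (rewrite Rpow_mult_distr; ring).
  apply Ha.
Qed.

Lemma ps_bounded_add a b r Ma Mb : ps_bounded a r Ma -> ps_bounded b r Mb ->
  ps_bounded (fun n => a n + b n) r (Ma + Mb).
Proof.
  intros Ha Hb n; rewrite Rmult_plus_distr_r.
  eapply Rle_trans; [apply Rabs_triang | apply Rplus_le_compat; auto].
Qed.

Lemma ps_bounded_sub a b r Ma Mb : ps_bounded a r Ma -> ps_bounded b r Mb ->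
  ps_bounded (fun n => a n - b n) r (Ma + Mb).
Proof.
  intros Ha Hb n; unfold Rminus; rewrite Rmult_plus_distr_r.
  eapply Rle_trans; [apply Rabs_triang | apply Rplus_le_compat; auto].
  rewrite Ropp_mult_distr_l_reverse, Rabs_Ropp; auto.
Qed.

Lemma INR_S_le_pow2 n : INR (S n) <= 2 ^ n.
Proof.
  induction n as [|n IH]; [simpl; lra|].
  rewrite S_INR; simpl pow; pose proof (pow_R1_Rle 2 n ltac:(lra)); lra.
Qed.

Lemma ps_bounded_mult a b r Ma Mb : ps_bounded a r Ma -> ps_bounded b r Mb ->
  ps_bounded (PS_mult a b) (r / 2) (Ma * Mb).
Proof.
  intros Ha Hb n.
  pose proof (ps_bounded_nonneg _ _ _ Ha) as HMa; pose proof (ps_bounded_nonneg _ _ _ Hb) as HMb.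
  assert (Hterms : Rabs (PS_mult a b n * r ^ n) <= INR (S n) * (Ma * Mb)).
  { unfold PS_mult; rewrite Rmult_comm, scal_sum.
    eapply Rle_trans; [apply sum_f_R0_triangle|].
    eapply Rle_trans; [apply (sum_Rle _ (fun _ => Ma * Mb))|rewrite sum_cte; lra].
    intros k Hk.
    assert (Hpow : r ^ n = r ^ k * r ^ (n - k)) by (rewrite <- pow_add; f_equal; lia).
    replace (a k * b (n - k)%nat * r ^ n) with ((a k * r ^ k) * (b (n - k)%nat * r ^ (n - k)))
      by (rewrite Hpow; ring).
    rewrite Rabs_mult; apply Rmult_le_compat; auto using Rabs_pos. }
  unfold Rdiv; rewrite Rpow_mult_distr, <- Rmult_assoc, Rabs_mult, pow_inv.
  rewrite (Rabs_right (/ 2 ^ n)) by (apply Rle_ge, Rlt_le, Rinv_0_lt_compat, pow_lt; lra).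
  apply (Rmult_le_reg_r (2 ^ n)); [apply pow_lt; lra|].
  rewrite Rmult_assoc, Rinv_l by (apply pow_nonzero; lra).
  pose proof (INR_S_le_pow2 n); pose proof (Rmult_le_pos _ _ HMa HMb); nra.
Qed.

Lemma is_pseries_bounded a r M x :
  ps_bounded a r M -> Rabs x < r -> is_pseries a x (PSeries a x).
Proof.
  intros Ha Hx; apply PSeries_correct, CV_radius_inside, (ps_bounded_CV_radius a r M); auto.
Qed.

Lemma PSeries_mult_bounded a b r Ma Mb x :
  ps_bounded a r Ma -> ps_bounded b r Mb -> Rabs x < r ->
  PSeries (PS_mult a b) x = PSeries a x * PSeries b x.
Proof. intros Ha Hb Hx; apply PSeries_mult; eapply ps_bounded_CV_radius; eauto. Qed.

Lemma locally_0_ball (P : R -> Prop) r : 0 < r -> (forall x, Rabs x < r -> P x) -> locally 0 P.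
Proof.
  intros Hr HP; exists (mkposreal r Hr); intros x Hx; apply HP.
  change (Rabs (x - 0) < r) in Hx; rewrite Rminus_0_r in Hx; exact Hx.
Qed.

Lemma Derive_n_PSeries_bounded f a r M n : 0 < r -> ps_bounded a r M ->
  (forall x, Rabs x < r -> f x = PSeries a x) -> Derive_n f n 0 = a n * INR (fact n).
Proof.
  intros Hr Ha Hf; rewrite (Derive_n_ext_loc f (PSeries a)).
  - apply Derive_n_coef; eapply ps_bounded_CV_radius_pos; eauto.
  - apply (locally_0_ball _ r Hr Hf).
Qed.

Lemma ps_bounded_coef_unique a b r Ma Mb : 0 < r -> ps_bounded a r Ma -> ps_bounded b r Mb ->
  (forall x, Rabs x < r -> PSeries a x = PSeries b x) -> forall n, a n = b n.
Proof.
  intros Hr Ha Hb Hab n; apply PSeries_ext_recip;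
    [eapply ps_bounded_CV_radius_pos; eauto .. | apply (locally_0_ball _ r Hr Hab)].
Qed.

Lemma is_pseries_finite a N (x : R) : (forall n, (N < n)%nat -> a n = 0) ->
  is_pseries a x (sum_f_R0 (fun n => a n * x ^ n) N).
Proof.
  intros Ha; apply is_pseries_R.
  enough (H : is_lim_seq (sum_n (fun n => a n * x ^ n)) (sum_f_R0 (fun n => a n * x ^ n) N))
    by exact H.
  apply (is_lim_seq_ext_loc (fun _ => sum_f_R0 (fun n => a n * x ^ n) N));
    [|apply is_lim_seq_const].
  exists N; intros n Hn; rewrite sum_n_Reals.
  induction Hn as [|n Hn IH]; [reflexivity|].
  rewrite tech5, Ha, <- IH by lia; ring.
Qed.

Lemma is_pseries_zero (x : R) : is_pseries (fun _ => 0) x 0.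
Proof.
  pose proof (is_pseries_finite (fun _ => 0) 0 x (fun _ _ => eq_refl)) as H.
  simpl in H; rewrite Rmult_0_l in H; exact H.
Qed.

Definition ps_one (n : nat) : R := match n with 0 => 1 | S _ => 0 end.

Lemma is_pseries_ps_one (x : R) : is_pseries ps_one x 1.
Proof.
  pose proof (is_pseries_finite ps_one 0 x) as H; simpl in H; rewrite Rmult_1_r in H.
  apply H; intros [|n] Hn; [lia | reflexivity].
Qed.

Lemma ps_bounded_ps_one r : ps_bounded ps_one r 1.
Proof. intros [|n]; simpl; rewrite ?Rmult_1_l, ?Rmult_0_l, ?Rabs_R1, ?Rabs_R0; lra. Qed.

Lemma is_pseries_Rplus a b (x la lb : R) :
  is_pseries a x la -> is_pseries b x lb -> is_pseries (fun n => a n + b n) x (la + lb).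
Proof. exact (is_pseries_plus a b x la lb). Qed.

Lemma is_pseries_Rminus a b (x la lb : R) :
  is_pseries a x la -> is_pseries b x lb -> is_pseries (fun n => a n - b n) x (la - lb).
Proof. exact (is_pseries_minus a b x la lb). Qed.

Lemma is_pseries_Rscal k a (x l : R) :
  is_pseries a x l -> is_pseries (fun n => k * a n) x (k * l).
Proof. apply (is_pseries_scal k a x l); unfold mult; simpl; ring. Qed.

Lemma is_pseries_scale_pow k a (x l : R) :
  is_pseries a (k * x) l -> is_pseries (fun n => k ^ n * a n) x l.
Proof.
  intros H; apply is_pseries_R in H; apply is_pseries_R.
  eapply is_series_ext; [|exact H]; intros n; simpl; rewrite Rpow_mult_distr; ring.
Qed.

Lemma sum_f_R0_pairs F n :
  sum_f_R0 F (2 * n + 1) = sum_f_R0 (fun i => F (2 * i)%nat + F (2 * i + 1)%nat) n.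
Proof.
  induction n as [|n IH]; [simpl; ring|].
  replace (2 * S n + 1)%nat with (S (S (2 * n + 1))) by lia.
  rewrite !tech5, IH; replace (S (2 * n + 1)) with (2 * S n)%nat by lia.
  replace (S (2 * S n)) with (2 * S n + 1)%nat by lia; ring.
Qed.

Lemma PS_mult_odd_r u v m : (forall j, v (2 * j)%nat = 0) ->
  PS_mult u v (2 * m + 2) = sum_f_R0 (fun i => u (2 * i + 1)%nat * v (2 * (m - i) + 1)%nat) m.
Proof.
  intros Hv; unfold PS_mult.
  replace (2 * m + 2)%nat with (S (2 * m + 1)) by lia.
  rewrite tech5, sum_f_R0_pairs, Nat.sub_diag, (Hv 0%nat : v 0%nat = 0), Rmult_0_r, Rplus_0_r.
  apply sum_eq; intros i Hi.
  replace (S (2 * m + 1) - 2 * i)%nat with (2 * (m + 1 - i))%nat by lia.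
  replace (S (2 * m + 1) - (2 * i + 1))%nat with (2 * (m - i) + 1)%nat by lia.
  rewrite Hv; ring.
Qed.

Lemma PS_mult_shift_l a b n : a 0%nat = 0 ->
  PS_mult a b (S n) = PS_mult (fun k => a (S k)) b n.
Proof.
  intros Ha; unfold PS_mult; rewrite decomp_sum by lia; simpl pred.
  rewrite Ha, Rmult_0_l, Rplus_0_l; reflexivity.
Qed.

(* Reciprocal of a power series with constant term 1; [ps_inv_upto c n] holds its
   first n + 1 coefficients, which makes the course-of-values recursion structural. *)
Fixpoint ps_inv_upto (c : nat -> R) (n : nat) : nat -> R :=
  match n with
  | 0 => fun _ => 1
  | S n' => fun j => if (j <=? n')%nat then ps_inv_upto c n' j
                     else - sum_f_R0 (fun i => ps_inv_upto c n' i * c (S n' - i)%nat) n'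
  end.

Definition ps_inv (c : nat -> R) (n : nat) : R := ps_inv_upto c n n.

Lemma ps_inv_upto_stable c n j : (j <= n)%nat -> ps_inv_upto c n j = ps_inv c j.
Proof.
  induction n as [|n IH]; intros Hj.
  - replace j with 0%nat by lia; reflexivity.
  - destruct (Nat.eq_dec j (S n)) as [->|Hne]; [reflexivity|].
    simpl; destruct (Nat.leb_spec j n); [apply IH|]; lia.
Qed.

Lemma ps_inv_S c n : ps_inv c (S n) = - sum_f_R0 (fun i => ps_inv c i * c (S n - i)%nat) n.
Proof.
  unfold ps_inv at 1; cbn [ps_inv_upto]; rewrite (proj2 (Nat.leb_gt (S n) n)) by lia.
  f_equal; apply sum_eq; intros i Hi; rewrite ps_inv_upto_stable by lia; reflexivity.
Qed.

Lemma PS_mult_ps_inv c n : c 0%nat = 1 -> PS_mult (ps_inv c) c n = ps_one n.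
Proof.
  intros Hc; unfold PS_mult; destruct n as [|n].
  - simpl; rewrite Hc; unfold ps_inv; simpl; ring.
  - rewrite tech5, ps_inv_S, Nat.sub_diag, Hc; simpl; ring.
Qed.

Lemma Rabs_ps_inv_le c n : (forall k, Rabs (c k) <= 1) -> Rabs (ps_inv c n) <= 2 ^ n.
Proof.
  intros Hc; induction n as [n IH] using (well_founded_induction lt_wf).
  destruct n as [|n]; [unfold ps_inv; simpl; rewrite Rabs_R1; lra|].
  rewrite ps_inv_S, Rabs_Ropp.
  eapply Rle_trans; [apply sum_f_R0_triangle|].
  eapply Rle_trans; [apply (sum_Rle _ (fun i => 2 ^ i))|].
  - intros i Hi; rewrite Rabs_mult; pose proof (IH i ltac:(lia)); pose proof (Hc (S n - i)%nat).
    pose proof (Rabs_pos (ps_inv c i)); pose proof (Rabs_pos (c (S n - i)%nat)).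
    pose proof (pow_le 2 i ltac:(lra)); nra.
  - rewrite tech3 by lra; simpl; lra.
Qed.

Lemma ps_bounded_ps_inv c : (forall k, Rabs (c k) <= 1) -> ps_bounded (ps_inv c) (/ 2) 1.
Proof.
  intros Hc n; pose proof (Rabs_ps_inv_le c n Hc); pose proof (pow_lt 2 n ltac:(lra)).
  rewrite Rabs_mult, pow_inv, (Rabs_right (/ 2 ^ n))
    by (apply Rle_ge, Rlt_le, Rinv_0_lt_compat; lra).
  apply (Rmult_le_reg_r (2 ^ n)); [lra|].
  rewrite Rmult_assoc, Rinv_l by lra; lra.
Qed.

Lemma PSeries_ps_inv c x : c 0%nat = 1 -> (forall k, Rabs (c k) <= 1) -> Rabs x < / 2 ->
  PSeries (ps_inv c) x * PSeries c x = 1.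
Proof.
  intros Hc0 Hc Hx.
  rewrite <- (PSeries_mult_bounded _ _ (/ 2) 1 1); [| apply ps_bounded_ps_inv, Hc | | exact Hx].
  2: apply (ps_bounded_mono _ 1); [lra | apply ps_bounded_1, Hc].
  rewrite (PSeries_ext _ ps_one) by (intros; apply PS_mult_ps_inv, Hc0).
  apply is_pseries_unique, is_pseries_ps_one.
Qed.

Lemma Rabs_inv_fact_le n : Rabs (/ INR (fact n)) <= 1.
Proof.
  pose proof (INR_fact_lt_0 n); assert (1 <= INR (fact n)) by (apply (le_INR 1), lt_O_fact).
  rewrite Rabs_right by (apply Rle_ge, Rlt_le, Rinv_0_lt_compat; lra).
  rewrite <- Rinv_1; apply Rinv_le_contravar; lra.
Qed.

Lemma Rabs_sign_div_fact k n : Rabs ((-1) ^ k / INR (fact n)) <= 1.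
Proof. unfold Rdiv; rewrite Rabs_mult, pow_1_abs, Rmult_1_l; apply Rabs_inv_fact_le. Qed.

Definition sin_coef (n : nat) : R :=
  if Nat.even n then 0 else (-1) ^ Nat.div2 n / INR (fact n).
Definition cos_coef (n : nat) : R :=
  if Nat.even n then (-1) ^ Nat.div2 n / INR (fact n) else 0.

Lemma sin_coef_even m : sin_coef (2 * m) = 0.
Proof. unfold sin_coef; rewrite even_double; reflexivity. Qed.
Lemma sin_coef_odd m : sin_coef (2 * m + 1) = (-1) ^ m / INR (fact (2 * m + 1)).
Proof. unfold sin_coef; rewrite even_double_1, div2_double_1; reflexivity. Qed.
Lemma cos_coef_even m : cos_coef (2 * m) = (-1) ^ m / INR (fact (2 * m)).
Proof. unfold cos_coef; rewrite even_double, Nat.div2_double; reflexivity. Qed.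
Lemma cos_coef_odd m : cos_coef (2 * m + 1) = 0.
Proof. unfold cos_coef; rewrite even_double_1; reflexivity. Qed.

Lemma Rabs_sin_coef_le n : Rabs (sin_coef n) <= 1.
Proof.
  unfold sin_coef; destruct (Nat.even n); [rewrite Rabs_R0; lra | apply Rabs_sign_div_fact].
Qed.
Lemma Rabs_cos_coef_le n : Rabs (cos_coef n) <= 1.
Proof.
  unfold cos_coef; destruct (Nat.even n); [apply Rabs_sign_div_fact | rewrite Rabs_R0; lra].
Qed.

Lemma is_pseries_sin (x : R) : is_pseries sin_coef x (sin x).
Proof.
  unfold sin; destruct (exist_sin (Rsqr x)) as [l Hl]; apply is_series_Reals in Hl.
  replace (x * l) with (0 + x * l) by ring; apply is_pseries_odd_even.
  - apply (is_pseries_ext (fun _ => 0)); [intros n; rewrite sin_coef_even; reflexivity|].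
    apply is_pseries_zero.
  - apply is_pseries_R; rewrite <- Rsqr_pow2; eapply is_series_ext; [|exact Hl].
    intros n; rewrite sin_coef_odd; reflexivity.
Qed.

Lemma is_pseries_cos (x : R) : is_pseries cos_coef x (cos x).
Proof.
  unfold cos; destruct (exist_cos (Rsqr x)) as [l Hl]; apply is_series_Reals in Hl.
  replace l with (l + x * 0) by ring; apply is_pseries_odd_even.
  - apply is_pseries_R; rewrite <- Rsqr_pow2; eapply is_series_ext; [|exact Hl].
    intros n; rewrite cos_coef_even; reflexivity.
  - apply (is_pseries_ext (fun _ => 0)); [intros n; rewrite cos_coef_odd; reflexivity|].
    apply is_pseries_zero.
Qed.

Definition sinh_coef (n : nat) : R := if Nat.even n then 0 else / INR (fact n).
Definition cosh_coef (n : nat) : R := if Nat.even n then / INR (fact n) else 0.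

Lemma sinh_coef_even j : sinh_coef (2 * j) = 0.
Proof. unfold sinh_coef; rewrite even_double; reflexivity. Qed.

Lemma sinh_coef_odd j : sinh_coef (2 * j + 1) = / INR (fact (2 * j + 1)).
Proof. unfold sinh_coef; rewrite even_double_1; reflexivity. Qed.

Lemma cosh_coef_even j : cosh_coef (2 * j) = / INR (fact (2 * j)).
Proof. unfold cosh_coef; rewrite even_double; reflexivity. Qed.

Lemma is_pseries_exp_neg (x : R) :
  is_pseries (fun n => (-1) ^ n * / INR (fact n)) x (exp (- x)).
Proof. apply is_pseries_scale_pow; replace (-1 * x) with (- x) by ring; apply is_exp_Reals. Qed.

Lemma sinh_coef_exp n : sinh_coef n = / 2 * (/ INR (fact n) - (-1) ^ n * / INR (fact n)).
Proof.
  unfold sinh_coef; destruct (Nat.Even_or_Odd n) as [[m ->]|[m ->]].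
  - rewrite even_double, pow_1_even; ring.
  - rewrite even_double_1, Nat.add_1_r, pow_1_odd; field; apply INR_fact_neq_0.
Qed.

Lemma cosh_coef_exp n : cosh_coef n = / 2 * (/ INR (fact n) + (-1) ^ n * / INR (fact n)).
Proof.
  unfold cosh_coef; destruct (Nat.Even_or_Odd n) as [[m ->]|[m ->]].
  - rewrite even_double, pow_1_even; field; apply INR_fact_neq_0.
  - rewrite even_double_1, Nat.add_1_r, pow_1_odd; ring.
Qed.

Lemma is_pseries_sinh (x : R) : is_pseries sinh_coef x (sinh x).
Proof.
  unfold sinh; replace ((exp x - exp (- x)) / 2) with (/ 2 * (exp x - exp (- x))) by field.
  apply (is_pseries_ext (fun n => / 2 * (/ INR (fact n) - (-1) ^ n * / INR (fact n))));
    [intros n; symmetry; apply sinh_coef_exp|].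
  apply is_pseries_Rscal, is_pseries_Rminus; [apply is_exp_Reals | apply is_pseries_exp_neg].
Qed.

Lemma is_pseries_cosh (x : R) : is_pseries cosh_coef x (cosh x).
Proof.
  unfold cosh; replace ((exp x + exp (- x)) / 2) with (/ 2 * (exp x + exp (- x))) by field.
  apply (is_pseries_ext (fun n => / 2 * (/ INR (fact n) + (-1) ^ n * / INR (fact n))));
    [intros n; symmetry; apply cosh_coef_exp|].
  apply is_pseries_Rscal, is_pseries_Rplus; [apply is_exp_Reals | apply is_pseries_exp_neg].
Qed.

Lemma Rabs_sinh_coef_le n : Rabs (sinh_coef n) <= 1.
Proof.
  unfold sinh_coef; destruct (Nat.even n); [rewrite Rabs_R0; lra | apply Rabs_inv_fact_le].
Qed.
Lemma Rabs_cosh_coef_le n : Rabs (cosh_coef n) <= 1.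
Proof.
  unfold cosh_coef; destruct (Nat.even n); [apply Rabs_inv_fact_le | rewrite Rabs_R0; lra].
Qed.

Definition expm1_coef (n : nat) : R := / INR (fact (S n)).

Lemma Rabs_expm1_coef_le n : Rabs (expm1_coef n) <= 1.
Proof. apply Rabs_inv_fact_le. Qed.

Lemma exp_minus_1_PSeries x : Rabs x < 1 -> exp x - 1 = x * PSeries expm1_coef x.
Proof.
  intros Hx.
  assert (Hshift : is_pseries (PS_incr_1 expm1_coef) x (x * PSeries expm1_coef x)).
  { apply (is_pseries_incr_1 expm1_coef x), (is_pseries_bounded _ 1 1);
      [apply ps_bounded_1, Rabs_expm1_coef_le | exact Hx]. }
  assert (Hexp : is_pseries (fun n => / INR (fact n) - ps_one n) x (exp x - 1))
    by (apply is_pseries_Rminus; [apply is_exp_Reals | apply is_pseries_ps_one]).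
  rewrite <- (is_pseries_unique _ _ _ Hexp), <- (is_pseries_unique _ _ _ Hshift).
  apply PSeries_ext; intros [|n]; simpl.
  - rewrite Rinv_1; apply Rminus_diag_eq; reflexivity.
  - unfold expm1_coef; simpl; ring.
Qed.

(** * Tangent numbers *)

Definition sec_taylor : nat -> R := ps_inv cos_coef.
Definition tan_taylor : nat -> R := PS_mult sin_coef sec_taylor.

Lemma cos_coef_0 : cos_coef 0 = 1.
Proof. unfold cos_coef; simpl; field. Qed.

Lemma ps_bounded_sin_half : ps_bounded sin_coef (/ 2) 1.
Proof. apply (ps_bounded_mono _ 1); [lra | apply ps_bounded_1, Rabs_sin_coef_le]. Qed.

Lemma ps_bounded_tan_taylor : ps_bounded tan_taylor (/ 4) 1.
Proof.
  replace (/ 4) with (/ 2 / 2) by field; rewrite <- (Rmult_1_l 1).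
  apply ps_bounded_mult; [apply ps_bounded_sin_half | apply ps_bounded_ps_inv, Rabs_cos_coef_le].
Qed.

Lemma cos_sec x : Rabs x < / 2 -> cos x * PSeries sec_taylor x = 1.
Proof.
  intros Hx; rewrite Rmult_comm, <- (is_pseries_unique _ _ _ (is_pseries_cos x)).
  apply PSeries_ps_inv; [apply cos_coef_0 | apply Rabs_cos_coef_le | exact Hx].
Qed.

Lemma tan_PSeries x : Rabs x < / 4 -> tan x = PSeries tan_taylor x.
Proof.
  intros Hx; pose proof (cos_sec x ltac:(lra)) as Hsec.
  assert (cos x <> 0) by (intros Hc; rewrite Hc in Hsec; lra).
  unfold tan_taylor; rewrite (PSeries_mult_bounded _ _ (/ 2) 1 1);
    [| apply ps_bounded_sin_half | apply ps_bounded_ps_inv, Rabs_cos_coef_le | lra].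
  rewrite (is_pseries_unique _ _ _ (is_pseries_sin x)).
  unfold tan; replace (PSeries sec_taylor x) with (/ cos x) by (field_simplify_eq; lra).
  reflexivity.
Qed.

Lemma tangent_number_tan_taylor k :
  tangent_number k = tan_taylor (2 * k + 1) * INR (fact (2 * k + 1)).
Proof.
  apply (Derive_n_PSeries_bounded _ _ (/ 4) 1);
    [lra | apply ps_bounded_tan_taylor | apply tan_PSeries].
Qed.

Definition tan_half_taylor (n : nat) : R := (/ 2) ^ n * tan_taylor n.

Lemma ps_bounded_tan_half_taylor : ps_bounded tan_half_taylor (/ 2) 1.
Proof.
  apply ps_bounded_scale_pow; replace (/ 2 * / 2) with (/ 4) by field.
  apply ps_bounded_tan_taylor.
Qed.

Lemma tan_half_PSeries x : Rabs x < / 2 -> tan (x / 2) = PSeries tan_half_taylor x.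
Proof.
  intros Hx; symmetry; apply is_pseries_unique, is_pseries_scale_pow.
  replace (/ 2 * x) with (x / 2) by field.
  rewrite tan_PSeries by (unfold Rdiv; rewrite Rabs_mult, (Rabs_right (/ 2)); lra).
  apply (is_pseries_bounded _ (/ 4) 1); [apply ps_bounded_tan_taylor|].
  unfold Rdiv; rewrite Rabs_mult, (Rabs_right (/ 2)); lra.
Qed.

Lemma tan_half_identity n : PS_mult tan_half_taylor sin_coef n = ps_one n - cos_coef n.
Proof.
  apply (ps_bounded_coef_unique _ (fun n => ps_one n - cos_coef n) (/ 4) (1 * 1) (1 + 1));
    [lra | | |].
  - replace (/ 4) with (/ 2 / 2) by field.
    apply ps_bounded_mult; [apply ps_bounded_tan_half_taylor | apply ps_bounded_sin_half].
  - apply ps_bounded_sub; [apply ps_bounded_ps_one|].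
    apply (ps_bounded_mono _ 1); [lra | apply ps_bounded_1, Rabs_cos_coef_le].
  - intros x Hx.
    rewrite (PSeries_mult_bounded _ _ (/ 2) 1 1) by
      first [apply ps_bounded_tan_half_taylor | apply ps_bounded_sin_half | lra].
    rewrite <- tan_half_PSeries by lra.
    rewrite (is_pseries_unique _ _ _ (is_pseries_sin x)).
    rewrite (is_pseries_unique _ _ _
      (is_pseries_Rminus _ _ _ _ _ (is_pseries_ps_one x) (is_pseries_cos x))).
    pose proof (cos_sec (x / 2)) as Hsec.
    assert (cos (x / 2) <> 0).
    { intros Hc; rewrite Hc in Hsec; unfold Rdiv in Hsec.
      rewrite Rabs_mult, (Rabs_right (/ 2)) in Hsec; lra. }
    replace x with (2 * (x / 2)) at 2 3 by field.
    rewrite sin_2a, cos_2a_sin; unfold tan; field; assumption.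
Qed.

Definition tan_seq (k : nat) : R := tangent_number k / 4 ^ k.

Lemma boundary_condition_tan : boundary_condition tan_seq.
Proof.
  intros m; rewrite alt_binom_sum_boundary.
  rewrite (sum_eq _ (fun i => tan_half_taylor (2 * i + 1) * sin_coef (2 * (m - i) + 1) * 2)).
  - rewrite <- scal_sum, <- PS_mult_odd_r by apply sin_coef_even.
    rewrite tan_half_identity; replace (2 * m + 2)%nat with (2 * (m + 1))%nat by lia.
    rewrite cos_coef_even; replace (2 * (m + 1))%nat with (S (2 * m + 1)) by lia.
    simpl ps_one; rewrite pow_add.
    pose proof (INR_fact_neq_0 (S (2 * m + 1))); field; auto.
  - intros i Hi; unfold tan_seq, tan_half_taylor.
    rewrite tangent_number_tan_taylor, sin_coef_odd.
    rewrite pow_add, pow_mult; replace ((/ 2) ^ 2) with (/ 4) by field; rewrite pow_inv.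
    pose proof (INR_fact_neq_0 (2 * i + 1)); pose proof (INR_fact_neq_0 (2 * (m - i) + 1)).
    pose proof (pow_nonzero 4 i ltac:(lra)); field; auto.
Qed.

(** * Bernoulli numbers *)

Definition bern_taylor : nat -> R := ps_inv expm1_coef.

Lemma expm1_coef_0 : expm1_coef 0 = 1.
Proof. unfold expm1_coef; simpl; field. Qed.

Lemma ps_bounded_bern_taylor : ps_bounded bern_taylor (/ 2) 1.
Proof. apply ps_bounded_ps_inv, Rabs_expm1_coef_le. Qed.

Lemma bern_gf_PSeries x : Rabs x < / 2 -> bern_gf x = PSeries bern_taylor x.
Proof.
  intros Hx; unfold bern_gf; destruct (Req_EM_T x 0) as [->|Hx0].
  - rewrite PSeries_0; reflexivity.
  - pose proof (PSeries_ps_inv expm1_coef x expm1_coef_0 Rabs_expm1_coef_le Hx) as Hinv.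
    rewrite exp_minus_1_PSeries by lra; fold bern_taylor in Hinv.
    assert (PSeries expm1_coef x <> 0) by (intros Hzero; rewrite Hzero in Hinv; lra).
    field_simplify_eq; [lra | split; assumption].
Qed.

Lemma is_pseries_bern_gf x : Rabs x < / 2 -> is_pseries bern_taylor x (bern_gf x).
Proof.
  intros Hx; rewrite bern_gf_PSeries by exact Hx.
  apply (is_pseries_bounded _ (/ 2) 1); [apply ps_bounded_bern_taylor | exact Hx].
Qed.

Lemma bernoulli_bern_taylor n : bernoulli n = bern_taylor n * INR (fact n).
Proof.
  apply (Derive_n_PSeries_bounded _ _ (/ 2) 1);
    [lra | apply ps_bounded_bern_taylor | apply bern_gf_PSeries].
Qed.

Definition half_x_coef (n : nat) : R := match n with 1 => / 2 | _ => 0 end.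

Lemma is_pseries_half_x (x : R) : is_pseries half_x_coef x (x / 2).
Proof.
  replace (x / 2) with (sum_f_R0 (fun n => half_x_coef n * x ^ n) 1) by (simpl; field).
  apply is_pseries_finite; intros [|[|n]] Hn; [lia .. | reflexivity].
Qed.

Lemma ps_bounded_half_x r : Rabs r <= 1 -> ps_bounded half_x_coef r 1.
Proof.
  intros Hr [|[|n]]; simpl; rewrite ?Rmult_0_l, ?Rabs_R0; try lra.
  rewrite Rmult_1_r, Rabs_mult, (Rabs_right (/ 2)); lra.
Qed.

Definition bern_diff_taylor (n : nat) : R :=
  2 ^ n * bern_taylor n - bern_taylor n + half_x_coef n.

Lemma ps_bounded_bern_diff_taylor : ps_bounded bern_diff_taylor (/ 4) (1 + 1 + 1).
Proof.
  apply ps_bounded_add; [apply ps_bounded_sub|apply ps_bounded_half_x; rewrite Rabs_right; lra].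
  - apply ps_bounded_scale_pow; replace (2 * / 4) with (/ 2) by field.
    apply ps_bounded_bern_taylor.
  - apply (ps_bounded_mono _ (/ 2)); [lra | apply ps_bounded_bern_taylor].
Qed.

Lemma bern_diff_sinh x : x <> 0 ->
  (bern_gf (2 * x) - bern_gf x + x / 2) * sinh x = x * ((cosh x - 1) / 2).
Proof.
  intros Hx; unfold bern_gf.
  destruct (Req_EM_T x 0) as [|_]; [contradiction|].
  destruct (Req_EM_T (2 * x) 0) as [|_]; [lra|].
  unfold sinh, cosh; rewrite exp_Ropp; replace (2 * x) with (x + x) by ring; rewrite exp_plus.
  assert (HE1 : exp x <> 1) by (intros HE; apply Hx, exp_inv; rewrite exp_0; exact HE).
  pose proof (exp_pos x).
  assert (exp x * exp x - 1 <> 0) by (intros HE; apply HE1; nra).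
  field; repeat split; lra.
Qed.

Lemma is_pseries_bern_diff x : Rabs x < / 4 ->
  is_pseries bern_diff_taylor x (bern_gf (2 * x) - bern_gf x + x / 2).
Proof.
  intros Hx; apply is_pseries_Rplus; [apply is_pseries_Rminus | apply is_pseries_half_x].
  - apply is_pseries_scale_pow, is_pseries_bern_gf.
    rewrite Rabs_mult, Rabs_right; lra.
  - apply is_pseries_bern_gf; lra.
Qed.

Definition cosh_minus_1_half_x (n : nat) : R :=
  match n with 0 => 0 | S k => / 2 * (cosh_coef k - ps_one k) end.

Lemma is_pseries_cosh_minus_1_half_x (x : R) :
  is_pseries cosh_minus_1_half_x x (x * ((cosh x - 1) / 2)).
Proof.
  unfold Rdiv; rewrite (Rmult_comm (cosh x - 1)).
  exact (is_pseries_incr_1 (fun k => / 2 * (cosh_coef k - ps_one k)) x _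
    (is_pseries_Rscal _ _ _ _
      (is_pseries_Rminus _ _ _ _ _ (is_pseries_cosh x) (is_pseries_ps_one x)))).
Qed.

Lemma ps_bounded_cosh_minus_1_half_x : ps_bounded cosh_minus_1_half_x 1 1.
Proof.
  apply ps_bounded_1; intros [|k]; simpl; [rewrite Rabs_R0; lra|].
  rewrite Rabs_mult, Rabs_right by lra.
  pose proof (Rabs_triang (cosh_coef k) (- ps_one k)) as Htri; rewrite Rabs_Ropp in Htri.
  pose proof (Rabs_cosh_coef_le k).
  assert (Rabs (ps_one k) <= 1) by (destruct k; simpl; rewrite ?Rabs_R1, ?Rabs_R0; lra).
  unfold Rminus; lra.
Qed.

Lemma bern_diff_identity n :
  PS_mult bern_diff_taylor sinh_coef n = cosh_minus_1_half_x n.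
Proof.
  assert (Hsinh : ps_bounded sinh_coef (/ 4) 1)
    by (apply (ps_bounded_mono _ 1); [lra | apply ps_bounded_1, Rabs_sinh_coef_le]).
  apply (ps_bounded_coef_unique _ _ (/ 8) ((1 + 1 + 1) * 1) 1); [lra | | |].
  - replace (/ 8) with (/ 4 / 2) by field.
    apply ps_bounded_mult; [apply ps_bounded_bern_diff_taylor | exact Hsinh].
  - apply (ps_bounded_mono _ 1); [lra | apply ps_bounded_cosh_minus_1_half_x].
  - intros x Hx.
    rewrite (PSeries_mult_bounded _ _ (/ 4) (1 + 1 + 1) 1)
      by first [apply ps_bounded_bern_diff_taylor | exact Hsinh | lra].
    rewrite (is_pseries_unique _ _ _ (is_pseries_bern_diff x ltac:(lra))),
      (is_pseries_unique _ _ _ (is_pseries_sinh x)),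
      (is_pseries_unique _ _ _ (is_pseries_cosh_minus_1_half_x x)).
    destruct (Req_EM_T x 0) as [->|Hx0]; [rewrite sinh_0; ring | apply bern_diff_sinh, Hx0].
Qed.

Definition bern_seq (k : nat) : R := bern_coef (2 * k).

Lemma bern_seq_bern_diff_taylor i :
  bern_seq i / INR (fact (2 * i + 1)) = 4 * (-1) ^ i * bern_diff_taylor (2 * i + 2).
Proof.
  unfold bern_seq, bern_coef, bern_diff_taylor; cbv zeta.
  rewrite even_double, Nat.div2_double, bernoulli_bern_taylor.
  replace (half_x_coef (2 * i + 2)) with 0
    by (replace (2 * i + 2)%nat with (S (S (2 * i))) by lia; reflexivity).
  replace (fact (2 * i + 2)) with ((2 * i + 2) * fact (2 * i + 1))%nat
    by (replace (2 * i + 2)%nat with (S (2 * i + 1)) by lia; reflexivity).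
  rewrite mult_INR.
  replace (INR (2 * i + 2)) with (2 * (INR i + 1)) by (rewrite plus_INR, mult_INR; simpl; ring).
  rewrite plus_INR, INR_1.
  pose proof (pos_INR i); pose proof (INR_fact_neq_0 (2 * i + 1)).
  field; split; [lra | assumption].
Qed.

Lemma boundary_condition_bern : boundary_condition bern_seq.
Proof.
  intros m; rewrite alt_binom_sum_boundary.
  rewrite (sum_eq _ (fun i => bern_diff_taylor (S (2 * i + 1)) * sinh_coef (2 * (m - i) + 1)
                              * (4 * (-1) ^ m))).
  - rewrite <- scal_sum.
    rewrite <- (PS_mult_odd_r (fun k => bern_diff_taylor (S k))) by apply sinh_coef_even.
    rewrite <- PS_mult_shift_l by (unfold bern_diff_taylor, bern_taylor, ps_inv; simpl; ring).
    rewrite bern_diff_identity; unfold cosh_minus_1_half_x.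
    replace (2 * m + 2)%nat with (2 * (m + 1))%nat by lia.
    rewrite cosh_coef_even; replace (2 * (m + 1))%nat with (S (2 * m + 1)) by lia; simpl ps_one.
    pose proof (INR_fact_neq_0 (S (2 * m + 1))); field; auto.
  - intros i Hi; rewrite bern_seq_bern_diff_taylor, sinh_coef_odd.
    replace (S (2 * i + 1)) with (2 * i + 2)%nat by lia.
    replace ((-1) ^ m) with ((-1) ^ i * (-1) ^ (m - i)) by (rewrite <- pow_add; f_equal; lia).
    field; apply INR_fact_neq_0.
Qed.

Lemma is_series_walks_to_even t k : boundary_condition t ->
  is_series (fun n => INR (nwalks n (2 * k) 0) * (1 / 2) ^ n) (t k).
Proof.
  intros Ht; pose proof (walk_weight_series t Ht (2 * k) 0) as H.
  rewrite (green_even t _ _ k), alt_binom_sum_le_2 in H by lia.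
  rewrite Rmult_1_r in H; exact H.
Qed.

Lemma nwalks_to_odd n k : nwalks n (2 * k + 1) 0 = 0%nat.
Proof.
  destruct (Nat.eq_dec (nwalks n (2 * k + 1) 0) 0) as [|Hn]; [assumption|].
  destruct (nwalks_parity _ _ _ Hn) as [[p Hp] [q Hq]]; lia.
Qed.

Lemma nwalks_neg_half n a :
  INR (nwalks n a 0) * (- (1 / 2)) ^ n = INR (nwalks n a 0) * (1 / 2) ^ n.
Proof.
  destruct (Nat.eq_dec (nwalks n a 0) 0) as [->|Hn]; [simpl; ring|].
  destruct (nwalks_parity _ _ _ Hn) as [_ [p Hp]]; rewrite Nat.add_0_l in Hp; subst n.
  replace (- (1 / 2)) with (-1 * (1 / 2)) by ring; rewrite Rpow_mult_distr, pow_1_even; ring.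
Qed.

Lemma is_series_zero : is_series (fun _ : nat => 0) 0.
Proof.
  pose proof (is_pseries_zero 0) as H; apply is_pseries_R in H.
  eapply is_series_ext; [|exact H]; intros n; simpl; ring.
Qed.

Lemma is_series_walks_to_odd (t0 : R) k :
  is_series (fun n => INR (nwalks n (2 * k + 1) 0) * t0 ^ n) 0.
Proof.
  eapply is_series_ext; [|exact is_series_zero].
  intros n; rewrite nwalks_to_odd; simpl; ring.
Qed.

Theorem theorem1p3 :
  (forall t0 : R, (t0 = 1/2 \/ t0 = -(1/2)) ->
     forall i : nat,
       is_series (fun n : nat => INR (nwalks n i 0) * t0 ^ n) (tan_coef i))
  /\
  (forall i : nat,
       is_series (fun n : nat => INR (nwalks n i 0) * (1/2) ^ n) (bern_coef i)).
Proof.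
  split; [intros t0 Ht0|]; intros i; destruct (Nat.Even_or_Odd i) as [[k ->]|[k ->]].
  - unfold tan_coef; rewrite even_double, Nat.div2_double.
    pose proof (is_series_walks_to_even tan_seq k boundary_condition_tan) as Htan.
    destruct Ht0 as [->| ->]; [exact Htan|].
    eapply is_series_ext; [|exact Htan]; intros n; symmetry; apply nwalks_neg_half.
  - unfold tan_coef; rewrite even_double_1; apply is_series_walks_to_odd.
  - exact (is_series_walks_to_even bern_seq k boundary_condition_bern).
  - unfold bern_coef; cbv zeta; rewrite even_double_1; apply is_series_walks_to_odd.
Qed.
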